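(* Let $\{d_i,\mathcal F_i\}_{i=1}^n$ be a (real-valued) martingale difference sequence. Suppose $v_{i-1}$, $i\in[n]$, are positive $\mathcal F_{i-1}$-measurable random variables such that $\mathbb E[\exp(\lambda d_i)\mid\mathcal F_{i-1}]\le\exp\!\left(\frac{\lambda^2}{2}v_{i-1}\right)$ for all $i\in[n]$ and all $\lambda>0$. Let $S_t=\sum_{i=1}^t d_i$ and $V_t=\sum_{i=1}^t v_{i-1}$. Let $\alpha_i\ge0$ and $\alpha=\max_{i\in[n]}\alpha_i$. Then for all $x,\beta>0$, \[ \Pr\!\left[\bigcup_{t=1}^n\left\{S_t\ge x\ \text{and}\ V_t\le\sum_{i=1}^t\alpha_i d_i+\beta\right\}\right]\le\exp\!\left(-\frac{x}{4\alpha+8\beta/x}\right). \]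
   Context: $[n]=\{1,\dots,n\}$. *)

From HB Require Import structures.
From mathcomp Require Import all_boot all_order all_algebra.
From mathcomp Require Import all_classical all_reals all_analysis.
Set Implicit Arguments. Unset Strict Implicit. Unset Printing Implicit Defensive.
Import Order.TTheory GRing.Theory Num.Theory.
Local Open Scope classical_set_scope.
Local Open Scope ring_scope.

Definition sub_sigma_algebra {d} {T : measurableType d} (G : set (set T)) :=
  sigma_algebra setT G /\ G `<=` measurable.

Definition measurable_wrt {d} {T : measurableType d} {R : realType}
  (G : set (set T)) (X : T -> R) :=
  forall B : set R, measurable B -> G (X @^-1` B).

Definition filtration_upto {d} {T : measurableType d}
  (F : nat -> set (set T)) (n : nat) :=
  (forall i, (i <= n)%N -> sub_sigma_algebra (F i)) /\
  (forall i, (i < n)%N -> F i `<=` F i.+1).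

(* {d_i, F_i}_{i=1}^n is a martingale difference sequence:
   d_i is F_i-measurable, integrable, and E[d_i | F_{i-1}] = 0, the latter
   written through the defining property of conditional expectation:
   int_A d_i dP = 0 for every A in F_{i-1}. *)
Definition mart_diff_seq {d} {T : measurableType d} {R : realType}
  (P : probability T R) (F : nat -> set (set T)) (dd : nat -> T -> R)
  (n : nat) :=
  filtration_upto F n /\
  forall i, (1 <= i <= n)%N ->
    [/\ measurable_wrt (F i) (dd i),
        P.-integrable setT (EFin \o dd i) &
        forall A, F i.-1 A -> (\int[P]_(x in A) (dd i x)%:E = 0)%E].

(* For nonnegative X and G-measurable real Y:  E[X | G] <= Y a.s.,
   expressed by the defining property of conditional expectation:
   int_A X dP <= int_A Y dP for all A in G. *)
Definition condexp_le {d} {T : measurableType d} {R : realType}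
  (P : probability T R) (G : set (set T)) (X Y : T -> R) :=
  forall A, G A -> (\int[P]_(x in A) (X x)%:E <= \int[P]_(x in A) (Y x)%:E)%E.

(* For fixed [th], [c] and [lam_i = th + c * alpha_i], the conditional moment bound makes
   [M_t = exp (\sum_(i <= t) (lam_i d_i - lam_i^2 v_(i-1) / 2))] a nonnegative
   supermartingale with [M_0 = 1], so Ville's maximal inequality gives
   [P (M_t >= e^a for some t <= n) <= e^-a]. When [lam_i^2 / 2 <= c], on the event
   [log M_t >= th S_t + c \sum_(i <= t) alpha_i d_i - c V_t >= th x - c beta].
   Choosing [s = x / (alpha x + beta)], [c = s^2 / 2] and [th = s - c alpha] yields
   [th x - c beta = x^2 / (2 (alpha x + beta)) >= x / (4 alpha + 8 beta / x)]. *)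

From Pilot Require Import Defs.
From HB Require Import structures.
From mathcomp Require Import all_boot all_order all_algebra.
From mathcomp Require Import all_classical all_reals all_analysis.
From mathcomp Require Import measurable_realfun ring lra.
Set Implicit Arguments. Unset Strict Implicit. Unset Printing Implicit Defensive.
Import Order.TTheory GRing.Theory Num.Theory.
Local Open Scope classical_set_scope.
Local Open Scope ring_scope.

Section SubSigmaAlgebra.
Context d (T : measurableType d) (R : realType) (G : set (set T)).
Hypothesis sG : Defs.sub_sigma_algebra G.

Let measurableE : @measurable _ (g_sigma_algebraType G) = G.
Proof. exact: measurable_g_measurableTypeE sG.1. Qed.

Lemma sub_sigma0 : G set0.
Proof. by rewrite -measurableE; exact: measurable0. Qed.

Lemma sub_sigmaC {A : set T} : G A -> G (~` A).
Proof. by rewrite -measurableE; exact: measurableC. Qed.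

Lemma sub_sigmaU {A B : set T} : G A -> G B -> G (A `|` B).
Proof. by rewrite -measurableE; exact: measurableU. Qed.

Lemma sub_sigmaI {A B : set T} : G A -> G B -> G (A `&` B).
Proof. by rewrite -measurableE; exact: measurableI. Qed.

Lemma measurable_wrtP (f : T -> R) :
  measurable_wrt G f <-> measurable_fun (setT : set (g_sigma_algebraType G)) f.
Proof.
split=> [mf _ B mB | mf B mB]; first by rewrite setTI measurableE; exact: mf.
by have := mf measurableT B mB; rewrite setTI measurableE.
Qed.

Lemma measurable_wrt_fun (f : T -> R) :
  measurable_wrt G f -> measurable_fun setT f.
Proof. by move=> mf _ B mB; rewrite setTI; apply: sG.2; exact: mf. Qed.

End SubSigmaAlgebra.

Lemma measurable_wrt_sub d (T : measurableType d) (R : realType)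
    (G H : set (set T)) (f : T -> R) :
  G `<=` H -> measurable_wrt G f -> measurable_wrt H f.
Proof. by move=> GH mf B mB; apply: GH; exact: mf. Qed.

Lemma filtration_upto_sub d (T : measurableType d) (F : nat -> set (set T))
    n s t :
  filtration_upto F n -> (s <= t <= n)%N -> F s `<=` F t.
Proof.
move=> [_ FS] /andP[+ tn]; elim: t tn => [|t IH] tn.
  by rewrite leqn0 => /eqP ->.
rewrite leq_eqVlt ltnS => /orP[/eqP -> // | st].
exact: subset_trans (IH (ltnW tn) st) (FS t tn).
Qed.

Lemma measurable_wrt_partial_sum d (T : measurableType d) (R : realType)
    (F : nat -> set (set T)) n (h : nat -> T -> R) :
  filtration_upto F n ->
  (forall i, (1 <= i <= n)%N -> measurable_wrt (F i) (h i)) ->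
  forall t, (t <= n)%N ->
    measurable_wrt (F t) (fun w => \sum_(1 <= i < t.+1) h i w).
Proof.
move=> hF mh; elim=> [|t IH] tn; apply/(measurable_wrtP (hF.1 _ tn)).
  under eq_fun do rewrite big_geq //; exact: measurable_cst.
under eq_fun do rewrite big_nat_recr //=.
apply: measurable_funD.
  apply/(measurable_wrtP (hF.1 _ tn)).
  apply: measurable_wrt_sub (IH (ltnW tn)).
  by apply: filtration_upto_sub hF _; rewrite leqnSn.
by apply/(measurable_wrtP (hF.1 _ tn)); apply: mh; rewrite tn.
Qed.

Section CondexpLeWeighted.
Local Open Scope ereal_scope.
Context d (T : measurableType d) (R : realType) (P : probability T R).
Variable G : set (set T).
Hypothesis sG : Defs.sub_sigma_algebra G.
Variables X Y : T -> R.
Hypotheses (X0 : forall w, (0 <= X w)%R) (Y0 : forall w, (0 <= Y w)%R).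
Hypotheses (mX : measurable_fun setT X) (mY : measurable_fun setT Y).
Hypothesis XY : condexp_le P G X Y.

Let mG A : G A -> measurable A := @sG.2 A.

Let weight (s : T -> R) := [/\ forall w, (0 <= s w)%R, measurable_fun setT s &
  condexp_le P G (fun w => s w * X w)%R (fun w => s w * Y w)%R].

Let weight_ext s t : weight s -> s =1 t -> weight t.
Proof. by move=> + /funext <-. Qed.

Let measurable_weighted (s Z : T -> R) A :
  measurable_fun setT s -> measurable_fun setT Z ->
  measurable_fun A (fun w => (s w * Z w)%:E).
Proof.
by move=> ms mZ; apply/measurable_EFinP/measurable_funTS; exact: measurable_funM.
Qed.

Let weight_indic c B : (0 <= c)%R -> G B -> weight (fun w => c * \1_B w)%R.
Proof.
move=> c0 GB; have mB := mG GB.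
split=> [w | | A GA]; first by rewrite mulr_ge0.
  by apply: measurable_funM => //; exact: measurable_indic.
have mA := mG GA.
have indicE (Z : T -> R) : (forall w, 0 <= Z w)%R -> measurable_fun setT Z ->
    \int[P]_(w in A) ((c * \1_B w)%R * Z w)%:E =
    c%:E * \int[P]_(w in A `&` B) (Z w)%:E.
  move=> Z0 mZ; under eq_integral do rewrite -mulrA EFinM.
  rewrite ge0_integralZl_EFin //; last 2 first.
  - by move=> w _; rewrite lee_fin mulr_ge0.
  - by apply: measurable_weighted mZ; exact: measurable_indic.
  congr (_ * _); rewrite integral_mkcondr; apply: eq_integral => w _.
  by rewrite /patch indicE; case: ifP => _; rewrite ?mul1r ?mul0r.
rewrite !indicE //; apply: lee_wpmul2l; first by rewrite lee_fin.
exact/XY/(sub_sigmaI sG).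
Qed.

Let weightD s t : weight s -> weight t -> weight (fun w => s w + t w)%R.
Proof.
move=> [s0 ms sXY] [t0 mt tXY].
split=> [w | | A GA]; [exact: addr_ge0 | exact: measurable_funD |].
have mA := mG GA.
have integralD (Z : T -> R) : (forall w, 0 <= Z w)%R -> measurable_fun setT Z ->
    \int[P]_(w in A) ((s w + t w) * Z w)%:E =
    \int[P]_(w in A) (s w * Z w)%:E + \int[P]_(w in A) (t w * Z w)%:E.
  move=> Z0 mZ; under eq_integral do rewrite mulrDl EFinD.
  by apply: ge0_integralD => //; (try exact: measurable_weighted) => w _;
    rewrite lee_fin mulr_ge0.
by rewrite (integralD X) ?(integralD Y) //; apply: leeD; [exact: sXY | exact: tXY].
Qed.

Let weight_sum (I : Type) (r : seq I) (p : pred I) (s : I -> T -> R) :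
  (forall k, weight (s k)) -> weight (fun w => \sum_(k <- r | p k) s k w)%R.
Proof.
move=> ws; elim: r => [|k r IH].
  have w0 := weight_indic (lexx (0%R : R)) (sub_sigma0 sG).
  by apply: weight_ext w0 _ => w; rewrite big_nil mul0r.
have wkr := weightD (ws k) IH.
by case: (boolP (p k)) => pk;
  [apply: weight_ext wkr _ | apply: weight_ext IH _] => w;
  rewrite big_cons ?pk // (negPf pk).
Qed.

Variable g : T -> R.
Hypotheses (g0 : forall w, (0 <= g w)%R) (mg : measurable_wrt G g).

Let weight_approx k : weight (approx setT (EFin \o g) k).
Proof.
have preimage_EFin (B : set R) :
    [set: T] `&` [set w | (EFin \o g) w \in EFin @` B] = g @^-1` B.
  apply/seteqP; split=> w /=; first by case=> _; rewrite inE => -[r Br [<-]].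
  by move=> Bgw; split=> //; rewrite inE; exists (g w).
apply: weightD.
  apply: weight_sum => j; apply: weight_indic; first by rewrite mulr_ge0.
  rewrite /dyadic_approx; case: ifP => _; last exact: sub_sigma0.
  by rewrite preimage_EFin; apply: mg; exact: measurable_itv.
apply: weight_indic => //.
have -> : integer_approx setT (EFin \o g) k = g @^-1` `[k%:R, +oo[.
  rewrite /integer_approx; apply/seteqP; split=> w /=.
    by case=> _; rewrite lee_fin in_itv /= andbT.
  by rewrite in_itv /= andbT lee_fin.
by apply: mg; exact: measurable_itv.
Qed.

Lemma condexp_le_wpM2l :
  condexp_le P G (fun w => g w * X w)%R (fun w => g w * Y w)%R.
Proof.
move=> A GA; have mA := mG GA.
pose a := approx setT (EFin \o g).
have a0 k w : (0 <= a k w)%R by case: (weight_approx k).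
have ma k : measurable_fun setT (a k) by case: (weight_approx k).
have g0E w : [set: T] w -> 0 <= (EFin \o g) w by move=> _ /=; rewrite lee_fin.
have maX k := measurable_weighted (A := A) (ma k) mX.
have aX0 k w : A w -> 0 <= (a k w * X w)%:E.
  by move=> _; rewrite lee_fin mulr_ge0.
have aX_nd w : A w ->
    {homo (fun k => (a k w * X w)%:E) : k l / (k <= l)%N >-> k <= l}.
  by move=> _ k l kl; rewrite lee_fin ler_wpM2r //; exact/lefP/nd_approx.
have -> : \int[P]_(w in A) (g w * X w)%:E =
          \int[P]_(w in A) limn (fun k => (a k w * X w)%:E).
  apply: eq_integral => w _; apply/esym/cvg_lim => //.
  apply/cvg_EFin; first exact: nearW.
  by apply: cvgMl; exact: (cvg_approx g0E Logic.I (ltry _)).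
rewrite (monotone_convergence P mA maX aX0 aX_nd).
apply: lime_le; first exact: cvgP (cvg_monotone_convergence mA maX aX0 aX_nd).
apply: nearW => k; have [_ _ aXY] := weight_approx k.
apply: le_trans (aXY A GA) _.
apply: ge0_le_integral => //.
- by move=> w _; rewrite lee_fin mulr_ge0.
- exact: measurable_weighted (ma k) mY.
- exact: measurable_weighted (measurable_wrt_fun sG mg) mY.
- move=> w _; rewrite lee_fin ler_wpM2r //.
  by have := le_approx k (x := w) g0E Logic.I; rewrite lee_fin.
Qed.

End CondexpLeWeighted.

Definition reaches {T} {R : realType} (M : nat -> T -> R) (K : R) (t : nat) :=
  [set w | exists s, (1 <= s <= t)%N /\ (K <= M s w)%R].

Lemma reaches0 T (R : realType) (M : nat -> T -> R) K : reaches M K 0 = set0.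
Proof. by apply/seteqP; split=> w // [s [/andP[s1 /(leq_trans s1)]]]. Qed.

Lemma reachesS T (R : realType) (M : nat -> T -> R) K t :
  reaches M K t.+1 = reaches M K t `|` [set w | (K <= M t.+1 w)%R].
Proof.
apply/seteqP; split=> w /=.
  move=> [s [/andP[s1]]]; rewrite leq_eqVlt ltnS => /orP[/eqP-> | st] Ks.
    by right.
  by left; exists s; rewrite s1 st.
case=> [[s [/andP[s1 st] Ks]] | Kt]; last by exists t.+1; rewrite leqnn.
by exists s; rewrite s1 (leq_trans st (leqnSn t)).
Qed.

Section Ville.
Local Open Scope ereal_scope.
Context d (T : measurableType d) (R : realType) (P : probability T R).
Variables (F : nat -> set (set T)) (n : nat) (M : nat -> T -> R) (K : R).
Hypotheses (hF : filtration_upto F n) (K_gt0 : (0 < K)%R).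
Hypotheses (M_ge0 : forall t w, (0 <= M t w)%R) (M0 : forall w, M 0 w = 1%R).
Hypothesis mM : forall t, (t <= n)%N -> measurable_wrt (F t) (M t).
Hypothesis M_super : forall t, (t < n)%N -> condexp_le P (F t) (M t.+1) (M t).

Let sF t : (t <= n)%N -> Defs.sub_sigma_algebra (F t) := hF.1 t.

Let F_level t : (t <= n)%N -> F t [set w | (K <= M t w)%R].
Proof.
move=> tn; have := mM tn (measurable_itv `[K, +oo[).
by congr (F t); apply/seteqP; split=> w /=; rewrite in_itv /= andbT.
Qed.

Let F_reaches t : (t <= n)%N -> F t (reaches M K t).
Proof.
elim: t => [|t IH] tn; first by rewrite reaches0; exact: sub_sigma0 (sF tn).
rewrite reachesS; apply: (sub_sigmaU (sF tn) _ (F_level tn)).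
by apply: filtration_upto_sub hF _ _ (IH (ltnW tn)); rewrite leqnSn.
Qed.

Lemma measurable_reaches t : (t <= n)%N -> measurable (reaches M K t).
Proof. by move=> tn; apply: (sF tn).2; exact: F_reaches. Qed.

Let measurable_M t : (t <= n)%N -> measurable_fun setT (EFin \o M t).
Proof.
by move=> tn; apply/measurable_EFinP; exact: (measurable_wrt_fun (sF tn) (mM tn)).
Qed.

(* The left-hand side bounds the mean at time [t] of [M] stopped when it first
   reaches [K]; the supermartingale property makes it nonincreasing in [t]. *)
Let ville_invariant t : (t <= n)%N ->
  K%:E * P (reaches M K t) + \int[P]_(w in ~` reaches M K t) (M t w)%:E <= 1.
Proof.
elim: t => [|t IH] tn.
  rewrite reaches0 measure0 mule0 add0e setC0.
  under eq_integral do rewrite M0.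
  by rewrite integral_cst // mul1e; exact: probability_le1.
set E := reaches M K t; set D := ~` E `&` [set w | (K <= M t.+1 w)%R].
have mE : measurable E := measurable_reaches (ltnW tn).
have mD : measurable D.
  by apply: measurableI; [exact: measurableC | exact: (sF tn).2 (F_level tn)].
have ES : reaches M K t.+1 = E `|` D by rewrite reachesS /D setUIr setUCr setTI.
have CE : ~` E = ~` reaches M K t.+1 `|` D.
  by rewrite ES setCU setUIl setUCl setIT setUidl //; exact: subIsetl.
have CD : ~` reaches M K t.+1 `&` D = set0 by rewrite ES setCU -setIA setICl setI0.
have KD : K%:E * P D <= \int[P]_(w in D) (M t.+1 w)%:E.
  rewrite -integral_cst //; apply: ge0_le_integral => //.
  - by move=> w _; rewrite lee_fin ltW.
  - exact: measurable_funTS (measurable_M tn).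
  - by move=> w [_ /=]; rewrite lee_fin.
have splitC : \int[P]_(w in ~` E) (M t.+1 w)%:E =
    \int[P]_(w in ~` reaches M K t.+1) (M t.+1 w)%:E +
    \int[P]_(w in D) (M t.+1 w)%:E.
  rewrite CE ge0_integral_setU //; first exact/measurableC/measurable_reaches.
  - exact: measurable_funTS (measurable_M tn).
  - by move=> w _; rewrite lee_fin.
  - exact/disj_set2P.
apply: le_trans (IH (ltnW tn)).
rewrite ES measureU //; last by rewrite setIA setICr set0I.
rewrite ge0_muleDr // -addeA leeD2l //.
apply: le_trans (M_super tn (sub_sigmaC (sF (ltnW tn)) (F_reaches (ltnW tn)))).
by rewrite splitC -ES addeC leeD2l.
Qed.

Lemma ville : P (reaches M K n) <= (K^-1)%:E.
Proof.
have KP : K%:E * P (reaches M K n) <= 1.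
  apply: le_trans (ville_invariant (leqnn n)); apply: leeDl.
  by apply: integral_ge0 => w _; rewrite lee_fin.
have Pfin := fin_num_measure P _ (measurable_reaches (leqnn n)).
move: KP; rewrite -(fineK Pfin) -EFinM !lee_fin => KP.
by rewrite -(ler_pM2l K_gt0) mulfV ?gt_eqF.
Qed.

End Ville.

Lemma tilted_sum_ge (R : realDomainType) t (th c x beta : R) (al d u : nat -> R) :
  0 <= th -> 0 <= c ->
  (forall i, (1 <= i <= t)%N -> (th + c * al i) ^+ 2 / 2 <= c /\ 0 <= u i) ->
  x <= \sum_(1 <= i < t.+1) d i ->
  \sum_(1 <= i < t.+1) u i <= \sum_(1 <= i < t.+1) al i * d i + beta ->
  th * x - c * beta <=
    \sum_(1 <= i < t.+1) ((th + c * al i) * d i - (th + c * al i) ^+ 2 / 2 * u i).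
Proof.
move=> th_ge0 c_ge0 hi Sx Vle.
apply: le_trans (_ : \sum_(1 <= i < t.+1) ((th + c * al i) * d i - c * u i) <= _).
  have -> : \sum_(1 <= i < t.+1) ((th + c * al i) * d i - c * u i) =
      th * \sum_(1 <= i < t.+1) d i + c * \sum_(1 <= i < t.+1) (al i * d i)
      - c * \sum_(1 <= i < t.+1) u i.
    by rewrite !mulr_sumr -big_split -sumrB; apply: eq_bigr => i _ /=; ring.
  have := ler_wpM2l th_ge0 Sx; have := ler_wpM2l c_ge0 Vle; rewrite mulrDr.
  lra.
apply: ler_sum_nat => i /hi[sq u0].
by rewrite lerD2l lerN2 ler_wpM2r.
Qed.

Lemma freedman_parameters (R : realFieldType) (a x b : R) :
  0 <= a -> 0 < x -> 0 < b ->
  exists th c, [/\ 0 < th, 0 <= c,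
    forall y, 0 <= y <= a -> (th + c * y) ^+ 2 / 2 <= c &
    x / (4 * a + 8 * b / x) <= th * x - c * b].
Proof.
move=> a_ge0 x_gt0 b_gt0.
have axb_gt0 : 0 < a * x + b by rewrite ltr_wpDl // mulr_ge0 // ltW.
pose s := x / (a * x + b).
have s_gt0 : 0 < s by rewrite divr_gt0.
have sK : s * (a * x + b) = x by rewrite divfK // gt_eqF.
have sa_le1 : s * a <= 1.
  by rewrite -(ler_pM2r axb_gt0) mul1r mulrAC sK; nra.
have th_gt0 : 0 < s - s ^+ 2 / 2 * a by nra.
exists (s - s ^+ 2 / 2 * a), (s ^+ 2 / 2); split => //.
- by rewrite divr_ge0 // sqr_ge0.
- move=> y /andP[y0 ya].
  have lam_ge0 : 0 <= s - s ^+ 2 / 2 * a + s ^+ 2 / 2 * y by nra.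
  have lam_le : s - s ^+ 2 / 2 * a + s ^+ 2 / 2 * y <= s by nra.
  rewrite ler_pM2r //; nra.
have D_gt0 : 0 < 4 * a + 8 * b / x.
  by rewrite ltr_wpDl ?mulr_ge0 // divr_gt0 // mulr_gt0.
rewrite ler_pdivrMr //.
have -> : (s - s ^+ 2 / 2 * a) * x - s ^+ 2 / 2 * b =
    s * x - s / 2 * (s * (a * x + b)) by ring.
rewrite sK.
have -> : (s * x - s / 2 * x) * (4 * a + 8 * b / x) =
    2 * (s * (a * x + b)) + 2 * (s * b) by field; rewrite gt_eqF.
by rewrite sK; nra.
Qed.

Section FreedmanTail.
Context d (T : measurableType d) (R : realType) (P : probability T R).
Variables (F : nat -> set (set T)) (n : nat) (dd v : nat -> T -> R).
Hypothesis hF : filtration_upto F n.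
Hypothesis mdd : forall i, (1 <= i <= n)%N -> measurable_wrt (F i) (dd i).
Hypothesis mv : forall i, (1 <= i <= n)%N -> measurable_wrt (F i.-1) (v i.-1).
Hypothesis v_ge0 : forall i, (1 <= i <= n)%N -> forall w, 0 <= v i.-1 w.
Hypothesis subgaussian : forall i, (1 <= i <= n)%N -> forall lam : R, 0 < lam ->
  condexp_le P (F i.-1) (fun w => expR (lam * dd i w))
                        (fun w => expR (lam ^+ 2 / 2 * v i.-1 w)).

Let sF t : (t <= n)%N -> Defs.sub_sigma_algebra (F t) := hF.1 t.

Let mv_succ i : (1 <= i <= n)%N -> measurable_wrt (F i) (v i.-1).
Proof.
move=> iN; apply: (measurable_wrt_sub _ (mv iN)).
by apply: filtration_upto_sub hF _; rewrite leq_pred (andP iN).2.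
Qed.

Definition exp_supermartingale (lam : nat -> R) t w :=
  expR (\sum_(1 <= i < t.+1) (lam i * dd i w - lam i ^+ 2 / 2 * v i.-1 w)).

Lemma measurable_wrt_exp_supermartingale lam t : (t <= n)%N ->
  measurable_wrt (F t) (exp_supermartingale lam t).
Proof.
move=> tn; apply/(measurable_wrtP (sF tn)).
apply: measurableT_comp => //; apply/(measurable_wrtP (sF tn)).
apply: (measurable_wrt_partial_sum hF _ tn) => i iN.
have /measurable_wrtP -> := sF (andP iN).2.
apply: measurable_funB; apply: measurable_funM => //;
  apply/(measurable_wrtP (sF (andP iN).2)); [exact: mdd | exact: mv_succ].
Qed.

Lemma exp_supermartingaleS lam : (forall i, (1 <= i <= n)%N -> 0 < lam i) ->
  forall t, (t < n)%N ->
  condexp_le P (F t) (exp_supermartingale lam t.+1) (exp_supermartingale lam t).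
Proof.
move=> lam_gt0 t tn; have tn' := ltnW tn; have iN : (1 <= t.+1 <= n)%N by rewrite tn.
pose l := lam t.+1.
pose g w := exp_supermartingale lam t w * expR (- (l ^+ 2 / 2 * v t w)).
have -> : exp_supermartingale lam t.+1 = fun w => g w * expR (l * dd t.+1 w).
  apply/funext => w; rewrite /g /exp_supermartingale big_nat_recr //= -mulrA -!expRD.
  by rewrite addrA addrAC.
have -> : exp_supermartingale lam t = fun w => g w * expR (l ^+ 2 / 2 * v t w).
  by apply/funext => w; rewrite /g -mulrA -expRD addNr expR0 mulr1.
apply: (condexp_le_wpM2l (sF tn') _ _ _ _ (subgaussian iN (lam_gt0 _ iN))).
- by move=> w; exact: expR_ge0.
- by move=> w; exact: expR_ge0.
- apply: measurableT_comp => //; apply: measurable_funM => //.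
  exact: (measurable_wrt_fun (sF (andP iN).2) (mdd iN)).
- apply: measurableT_comp => //; apply: measurable_funM => //.
  exact: (measurable_wrt_fun (sF tn') (mv iN)).
- by move=> w; rewrite mulr_ge0 ?expR_ge0.
apply/(measurable_wrtP (sF tn')); apply: measurable_funM.
  exact/(measurable_wrtP (sF tn'))/measurable_wrt_exp_supermartingale.
apply: measurableT_comp => //; apply: measurable_funN; apply: measurable_funM => //.
exact/(measurable_wrtP (sF tn'))/(mv iN).
Qed.

Definition freedman_event (alpha_ : nat -> R) (x beta : R) :=
  [set w | exists t, (1 <= t <= n)%N /\ x <= \sum_(1 <= i < t.+1) dd i w /\
    \sum_(1 <= i < t.+1) v i.-1 w <= \sum_(1 <= i < t.+1) alpha_ i * dd i w + beta].

Let measurable_partial_sum (h : nat -> T -> R) t :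
  (forall i, (1 <= i <= n)%N -> measurable_wrt (F i) (h i)) -> (t <= n)%N ->
  measurable_fun setT (fun w => \sum_(1 <= i < t.+1) h i w).
Proof.
move=> mh tn.
exact: (measurable_wrt_fun (sF tn) (measurable_wrt_partial_sum hF mh tn)).
Qed.

Lemma measurable_freedman_event alpha_ x beta :
  measurable (freedman_event alpha_ x beta).
Proof.
have mle (f g : T -> R) : measurable_fun setT f -> measurable_fun setT g ->
    measurable [set w | f w <= g w].
  move=> mf mg; rewrite -[X in measurable X]setTI.
  (* [fun w => f w <= g w] is a measurable boolean; take the preimage of [true]. *)
  exact: (measurable_fun_ler mf mg) measurableT [set true] Logic.I.
have -> : freedman_event alpha_ x beta = \bigcup_(t in [set t | (1 <= t <= n)%N])
    ([set w | x <= \sum_(1 <= i < t.+1) dd i w] `&`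
     [set w | \sum_(1 <= i < t.+1) v i.-1 w <=
              \sum_(1 <= i < t.+1) alpha_ i * dd i w + beta]).
  by apply/seteqP; split=> [w [t [tN Bw]] | w [t tN Bw]]; exists t.
apply: bigcup_measurable => t /= /andP[_ tn]; apply: measurableI; apply: mle.
- exact: measurable_cst.
- exact: (measurable_partial_sum mdd tn).
- exact: (measurable_partial_sum mv_succ tn).
apply: measurable_funD => //; apply: (measurable_partial_sum _ tn) => i iN.
have /measurable_wrtP -> := sF (andP iN).2.
apply: measurable_funM => //; apply/(measurable_wrtP (sF (andP iN).2)); exact: mdd.
Qed.

Lemma freedman_tail_bound (alpha_ : nat -> R) (x beta th c : R) :
  0 < th -> 0 <= c ->
  (forall i, (1 <= i <= n)%N ->
     0 <= alpha_ i /\ (th + c * alpha_ i) ^+ 2 / 2 <= c) ->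
  (P (freedman_event alpha_ x beta) <= (expR (- (th * x - c * beta)))%:E)%E.
Proof.
move=> th_gt0 c_ge0 hal.
pose lam i := th + c * alpha_ i.
have lam_gt0 i : (1 <= i <= n)%N -> 0 < lam i.
  by move=> /hal[al0 _]; rewrite ltr_wpDr ?mulr_ge0.
pose M := exp_supermartingale lam.
have M_ge0 t w : 0 <= M t w by exact: expR_ge0.
have M0 w : M 0%N w = 1 by rewrite /M /exp_supermartingale big_geq // expR0.
have mM := measurable_wrt_exp_supermartingale lam.
have := ville hF (expR_gt0 (th * x - c * beta)) M_ge0 M0 mM
  (exp_supermartingaleS lam_gt0).
rewrite expRN; apply: le_trans.
apply: le_measure; rewrite ?inE; first exact: measurable_freedman_event.
  exact: (measurable_reaches _ hF mM (leqnn n)).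
move=> w [t [tN [Sx Vle]]]; exists t; split=> //; rewrite ler_expR.
apply: (tilted_sum_ge (al := alpha_) (d := dd^~ w) (u := fun i => v i.-1 w)
  (ltW th_gt0) c_ge0 _ Sx Vle) => i iN.
have iN' : (1 <= i <= n)%N by rewrite (andP iN).1 (leq_trans (andP iN).2 (andP tN).2).
by split; [exact: (hal i iN').2 | exact: v_ge0].
Qed.

End FreedmanTail.

Theorem theorem3p3 (dsp : measure_display) (T : measurableType dsp)
  (R : realType) (P : probability T R) (n : nat)
  (F : nat -> set (set T)) (dd : nat -> T -> R) (v : nat -> T -> R)
  (alpha_ : nat -> R) (x beta : R) :
  mart_diff_seq P F dd n ->
  (forall i, (1 <= i <= n)%N ->
     measurable_wrt (F i.-1) (v i.-1) /\ (forall w, 0 < v i.-1 w)) ->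
  (forall i, (1 <= i <= n)%N -> forall lam : R, 0 < lam ->
     condexp_le P (F i.-1) (fun w => expR (lam * dd i w))
                           (fun w => expR (lam ^+ 2 / 2 * v i.-1 w))) ->
  (forall i, (1 <= i <= n)%N -> 0 <= alpha_ i) ->
  0 < x -> 0 < beta ->
  let alpha := \big[Num.max/0]_(1 <= i < n.+1) alpha_ i in
  let S t w := \sum_(1 <= i < t.+1) dd i w in
  let V t w := \sum_(1 <= i < t.+1) v i.-1 w in
  let event := [set w | exists t, (1 <= t <= n)%N /\
        x <= S t w /\
        V t w <= \sum_(1 <= i < t.+1) alpha_ i * dd i w + beta] in
  (P event <= (expR (- (x / (4 * alpha + 8 * beta / x))))%:E)%E.
Proof.
move=> [hF hd] hv hexp hal x_gt0 beta_gt0; cbv zeta.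
set alpha := \big[Num.max/0]_(1 <= i < n.+1) alpha_ i.
have alpha_ge0 : 0 <= alpha by exact: bigmax_ge_id.
have le_alpha i : (1 <= i <= n)%N -> alpha_ i <= alpha.
  by move=> iN; apply: le_bigmax_seq => //; rewrite mem_index_iota ltnS.
have [th [c [th_gt0 c_ge0 sq_le exponent_ge]]] :=
  freedman_parameters alpha_ge0 x_gt0 beta_gt0.
have mdd i : (1 <= i <= n)%N -> measurable_wrt (F i) (dd i) by move=> /hd[].
have v_ge0 i : (1 <= i <= n)%N -> forall w, 0 <= v i.-1 w.
  by move=> iN w; exact/ltW/(hv i iN).2.
apply: le_trans (freedman_tail_bound hF mdd (fun i iN => (hv i iN).1) v_ge0 hexp
  x beta th_gt0 c_ge0 _) _.
  by move=> i iN; split; [exact: hal | apply: sq_le; rewrite hal // le_alpha].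
by rewrite lee_fin ler_expR lerN2.
Qed.
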